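(* Let $\pi,\sigma$ be formal Poisson deformations of $\pi_0,\sigma_0$, let $k\ge0$, $X_{(k)}\in\lambda\mathrm{Der}(\mathcal{B})[[\lambda]]$ and $\Phi_{(k)}=\exp(X_{(k)})$, and suppose that for all $a_1,a_2\in\mathcal{A}$, $\Phi_{(k)}^{-1}\sigma(\Phi_{(k)}\phi_0(a_1),\Phi_{(k)}\phi_0(a_2))=\phi_0(\pi(a_1,a_2))+\lambda^{k+1}R_{k+1}(a_1,a_2)+O(\lambda^{k+2})$ for a bilinear map $R_{k+1}:\mathcal{A}\times\mathcal{A}\to\mathcal{B}$. Then $R_{k+1}$ is a $2$-cocycle in $C^\bullet_{\mathrm{CE,der}}(\mathcal{A},\mathcal{B})$.
   Context: $\mathbb{K}$ is a field of characteristic zero. $\mathcal{A},\mathcal{B}$ are commutative $\mathbb{K}$-algebras with Poisson brackets $\pi_0=\{\cdot,\cdot\}_{\mathcal{A}}$, $\sigma_0=\{\cdot,\cdot\}_{\mathcal{B}}$, and $\phi_0:\mathcal{A}\to\mathcal{B}$ is a Poisson morphism (extended $\lambda$-linearly). A formal Poisson deformation of $\pi_0$ is a $\mathbb{K}[[\lambda]]$-bilinear Poisson bracket on $\mathcal{A}[[\lambda]]$ with zeroth-order term $\pi_0$. $\exp(X)=\sum_nX^n/n!$ for $X\in\lambda\mathrm{Der}(\mathcal{B})[[\lambda]]$. Chevalley–Eilenberg complex: $C^0_{\mathrm{CE}}(\mathcal{A},\mathcal{B})=\mathcal{B}$, $C^k_{\mathrm{CE}}$ = $k$-linear antisymmetric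 maps $\mathcal{A}^k\to\mathcal{B}$, $(\delta D)(a_0,\dots,a_k)=\sum_j(-1)^j\{\phi_0(a_j),D(\dots,\widehat{a_j},\dots)\}_{\mathcal{B}}+\sum_{i<j}(-1)^{i+j}D(\{a_i,a_j\}_{\mathcal{A}},\dots,\widehat{a_i},\dots,\widehat{a_j},\dots)$; $C^\bullet_{\mathrm{CE,der}}(\mathcal{A},\mathcal{B})$ is the subcomplex of cochains that are derivations along $\phi_0$ in each argument, i.e. $D(\dots,aa',\dots)=\phi_0(a)D(\dots,a',\dots)+D(\dots,a,\dots)\phi_0(a')$. *)

From HB Require Import structures.
From mathcomp Require Import all_boot all_order all_algebra.
Set Implicit Arguments. Unset Strict Implicit. Unset Printing Implicit Defensive.
Import Order.TTheory GRing.Theory Num.Theory.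
Local Open Scope ring_scope.

Section Defs.
Variable K : fieldType.

(* Formal power series T[[lambda]] as coefficient sequences. *)
Definition ser (T : Type) := nat -> T.

Definition cstS (T : comAlgType K) (b : T) : ser T :=
  fun n => if n is 0 then b else 0.

Definition mulS (T : comAlgType K) (f g : ser T) : ser T :=
  fun n => \sum_(i < n.+1) f i * g (n - i)%N.

Definition bilinearK (U V : comAlgType K) (p : U -> U -> V) : Prop :=
  (forall (c : K) x y z, p (c *: x + y) z = c *: p x z + p y z) /\
  (forall (c : K) x y z, p z (c *: x + y) = c *: p z x + p z y).

Definition is_poisson (T : comAlgType K) (p : T -> T -> T) : Prop :=
  [/\ bilinearK p,
      (forall a b, p a b = - p b a),
      (forall a b c, p (a * b) c = a * p b c + p a c * b) &
      (forall a b c, p (p a b) c + p (p b c) a + p (p c a) b = 0)].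

(* The K[[lambda]]-bilinear bracket sum_n lambda^n p_n on T[[lambda]] *)
Definition extS (T : comAlgType K) (p : nat -> T -> T -> T) (f g : ser T) : ser T :=
  fun n => \sum_(i < n.+1) \sum_(j < (n - i).+1) p i (f j) (g (n - i - j)%N).

Definition formal_poisson_deformation (T : comAlgType K)
    (p0 : T -> T -> T) (p : nat -> T -> T -> T) : Prop :=
  [/\ (forall a b, p 0%N a b = p0 a b),
      (forall n, bilinearK (p n)),
      (forall f g n, extS p f g n = - extS p g f n),
      (forall f g h n, extS p (mulS f g) h n
                       = mulS f (extS p g h) n + mulS (extS p f h) g n) &
      (forall f g h n, extS p (extS p f g) h n + extS p (extS p g h) f n
                       + extS p (extS p h f) g n = 0)].

Definition is_der (T : comAlgType K) (D : T -> T) : Prop :=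
  (forall (c : K) x y, D (c *: x + y) = c *: D x + D y) /\
  (forall x y, D (x * y) = x * D y + D x * y).

(* X = sum_n lambda^n X_n in lambda Der(T)[[lambda]] *)
Definition lambda_der (T : comAlgType K) (X : nat -> T -> T) : Prop :=
  (forall x, X 0%N x = 0) /\ (forall n, is_der (X n)).

Definition actS (T : comAlgType K) (X : nat -> T -> T) (f : ser T) : ser T :=
  fun n => \sum_(i < n.+1) X i (f (n - i)%N).

(* exp(X) = sum_m X^m / m!; since X_0 = 0, X^m f has order >= m, so the
   coefficient of lambda^n only receives contributions from m <= n. *)
Definition expS (T : comAlgType K) (X : nat -> T -> T) (f : ser T) : ser T :=
  fun n => \sum_(m < n.+1) (m`!%:R : K)^-1 *: iter m (actS X) f n.

Definition CE2_der (A B : comAlgType K) (phi0 : A -> B) (D : A -> A -> B) : Prop :=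
  [/\ bilinearK D,
      (forall a b, D a b = - D b a),
      (forall a a' b, D (a * a') b = phi0 a * D a' b + D a b * phi0 a') &
      (forall a a' b, D b (a * a') = phi0 a * D b a' + D b a * phi0 a')].

Definition CE_delta2 (A B : comAlgType K) (piA : A -> A -> A) (sigB : B -> B -> B)
    (phi0 : A -> B) (D : A -> A -> B) (a0 a1 a2 : A) : B :=
  sigB (phi0 a0) (D a1 a2) - sigB (phi0 a1) (D a0 a2) + sigB (phi0 a2) (D a0 a1)
  - D (piA a0 a1) a2 + D (piA a0 a2) a1 - D (piA a1 a2) a0.

Definition CE_der_2cocycle (A B : comAlgType K) (piA : A -> A -> A) (sigB : B -> B -> B)
    (phi0 : A -> B) (D : A -> A -> B) : Prop :=
  CE2_der phi0 D /\ (forall a0 a1 a2, CE_delta2 piA sigB phi0 D a0 a1 a2 = 0).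

End Defs.

(* Conjugating the deformed bracket [sigma] by [Phi = exp X] gives again an
   antisymmetric biderivation of [B[[lambda]]] satisfying the Jacobi identity,
   because [exp X] is an automorphism of the algebra [B[[lambda]]] commuting
   with multiplication by [lambda] (Leibniz formula for iterates of the
   derivation [X], which needs characteristic zero). On [phi0 A] the order
   [k+1] coefficient of this bracket is [phi0 \o pi_(k+1) + R], so [R] inherits
   antisymmetry and the Leibniz rule; the Jacobi identity at order [k+1],
   expanded by [lambda]-linearity, minus the Jacobi identity of [pi] at the same
   order, is exactly [delta R = 0]. *)

From mathcomp Require Import all_boot all_order all_algebra.
From mathcomp Require Import ring zify.
From Stdlib Require Import FunctionalExtensionality.
Import GRing.Theory.
Local Open Scope ring_scope.
Set Implicit Arguments. Unset Strict Implicit.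

Section TriangularSums.
Variable V : zmodType.

Lemma big_ord_widen0 (a b : nat) (F : nat -> V) : (a <= b)%N ->
  (forall j, (a <= j)%N -> F j = 0) -> \sum_(j < a) F j = \sum_(j < b) F j.
Proof.
move=> le_ab F0; rewrite (big_ord_widen b F le_ab) big_mkcond.
by apply: eq_bigr => j _; case: ifP => // /negbT; rewrite -leqNgt => /F0.
Qed.

Lemma big_triangle_cond n (F : nat -> nat -> V) :
  \sum_(i < n.+1) \sum_(j < (n - i).+1) F i j
  = \sum_(i < n.+1) \sum_(j < n.+1 | (i + j <= n)%N) F i j.
Proof.
apply: eq_bigr => i _.
rewrite (big_ord_widen n.+1 (F i)); last by rewrite ltnS leq_subr.
by apply: eq_bigl => j; rewrite ltnS leq_subRL // -ltnS.
Qed.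

Lemma exchange_big_triangle n (F : nat -> nat -> V) :
  \sum_(i < n.+1) \sum_(j < (n - i).+1) F i j
  = \sum_(j < n.+1) \sum_(i < (n - j).+1) F i j.
Proof.
rewrite big_triangle_cond (big_triangle_cond n (fun j i => F i j)).
under eq_bigr do rewrite big_mkcond.
rewrite exchange_big; apply: eq_bigr => j _; rewrite [RHS]big_mkcond.
by apply: eq_bigr => i _; rewrite addnC.
Qed.

Lemma big_antidiagonal n (F : nat -> nat -> V) :
  \sum_(m < n.+1) \sum_(p < m.+1) F p (m - p)%N
  = \sum_(p < n.+1) \sum_(q < (n - p).+1) F p q.
Proof.
elim: n => [|n IHn]; first by rewrite !big_ord1.
rewrite big_ord_recr /= IHn.
under [RHS]eq_bigr => p _ do rewrite big_ord_recr /=.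
rewrite big_split /=; congr (_ + _).
rewrite [RHS]big_ord_recr /= subnn big_ord0 addr0.
by apply: eq_bigr => p _; rewrite subSn // -ltnS.
Qed.

Lemma big_triangle_assoc n (F : nat -> nat -> nat -> V) :
  \sum_(i < n.+1) \sum_(j < (n - i).+1) F i j (n - i - j)%N
  = \sum_(l < n.+1) \sum_(i < l.+1) F i (l - i)%N (n - l)%N.
Proof.
rewrite -(big_antidiagonal n (fun p q => F p q (n - p - q)%N)).
apply: eq_bigr => l _; apply: eq_bigr => i _; congr F.
by have := ltn_ord i; have := ltn_ord l; lia.
Qed.

Lemma sum_binS m (a : nat -> V) :
  \sum_(p < m.+1) (a p.+1 + a p) *+ 'C(m, p) = \sum_(p < m.+2) a p *+ 'C(m.+1, p).
Proof.
under eq_bigr do rewrite mulrnDl.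
rewrite big_split /= [RHS]big_ord_recl.
under [X in _ = _ + X]eq_bigr => p _ do rewrite lift0 binS mulrnDr.
rewrite big_split /= [X in _ + X]big_ord_recl.
under [X in _ + (_ + X)]eq_bigr => p _ do rewrite lift0.
rewrite [\sum_(i < m.+1) a i.+1 *+ 'C(m, i.+1)]big_ord_recr /=.
by rewrite (bin_small (ltnSn m)) mulr0n addr0 !bin0 addrCA [X in _ = _ + X]addrC.
Qed.

End TriangularSums.

Section BilinearK.
Variables (K : fieldType) (T U : comAlgType K) (p : T -> T -> U).
Hypothesis Hp : bilinearK p.

Lemma bilinearK_addl x y z : p (x + y) z = p x z + p y z.
Proof. by rewrite -[x]scale1r Hp.1 !scale1r. Qed.

Lemma bilinearK_0l z : p 0 z = 0.
Proof. by rewrite -(addNr z) -scaleN1r Hp.1 scaleN1r addNr. Qed.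

Lemma bilinearK_0r z : p z 0 = 0.
Proof. by rewrite -(addNr z) -scaleN1r Hp.2 scaleN1r addNr. Qed.

Lemma bilinearK_Nl x z : p (- x) z = - p x z.
Proof. by rewrite -(addr0 (- x)) -scaleN1r Hp.1 scaleN1r bilinearK_0l addr0. Qed.

End BilinearK.

Section Derivation.
Variables (K : fieldType) (T : comAlgType K) (D : T -> T).
Hypothesis HD : is_der D.

Lemma derD x y : D (x + y) = D x + D y.
Proof. by rewrite -[x]scale1r HD.1 !scale1r. Qed.

Lemma der0 : D 0 = 0.
Proof. by have := HD.1 (-1) 1 1; rewrite !scaleN1r !addNr. Qed.

Lemma der_sum I (r : seq I) (P : pred I) (F : I -> T) :
  D (\sum_(j <- r | P j) F j) = \sum_(j <- r | P j) D (F j).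
Proof. exact: (big_morph _ derD der0). Qed.

Lemma derMn x c : D (x *+ c) = D x *+ c.
Proof. by elim: c => [|c IHc]; rewrite ?der0 // !mulrS derD IHc. Qed.

End Derivation.

Section Series.
Variables (K : fieldType) (T : comAlgType K).
Implicit Types f g : ser T.

Definition addS f g : ser T := fun n => f n + g n.
Definition oppS f : ser T := fun n => - f n.
Definition zeroS : ser T := fun _ => 0.
(* [shiftS f] is [lambda * f]; [tailS f] is [(f - f 0) / lambda]. *)
Definition shiftS f : ser T := fun n => if n is m.+1 then f m else 0.
Definition tailS f : ser T := fun n => f n.+1.

Lemma seriesE f : f = addS (cstS (f 0%N)) (shiftS (tailS f)).
Proof. by apply: functional_extensionality => -[|n]; rewrite /addS /= ?addr0 ?add0r. Qed.

Lemma mulS_cstl (a : T) f n : mulS (cstS a) f n = a * f n.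
Proof. by rewrite /mulS big_ord_recl subn0 big1 ?addr0 // => i _; rewrite mul0r. Qed.

Lemma mulS_cstr (a : T) f n : mulS f (cstS a) n = f n * a.
Proof.
rewrite /mulS big_ord_recr /= subnn big1 ?add0r // => i _.
by have := ltn_ord i; rewrite -subn_gt0; case: (n - i)%N => // m _; rewrite mulr0.
Qed.

Lemma mulS_cst (a b : T) : mulS (cstS a) (cstS b) = cstS (a * b).
Proof.
by apply: functional_extensionality => -[|n]; rewrite mulS_cstl //= mulr0.
Qed.

Lemma additiveS_zero (F : ser T -> ser T) :
  (forall f g, F (addS f g) = addS (F f) (F g)) -> F zeroS = zeroS.
Proof.
move=> FD; apply: functional_extensionality => n.
have /(congr1 (fun s => s n)) := FD zeroS zeroS.
have -> : addS zeroS zeroS = zeroS by apply: functional_extensionality => m; rewrite /addS addr0.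
by rewrite /addS /zeroS => H; apply: (@addIr _ (F zeroS n)); rewrite -H add0r.
Qed.

Lemma additiveS_opp (F : ser T -> ser T) :
  (forall f g, F (addS f g) = addS (F f) (F g)) -> forall f, F (oppS f) = oppS (F f).
Proof.
move=> FD f; apply: functional_extensionality => n.
have /(congr1 (fun s => s n)) := FD f (oppS f).
have -> : addS f (oppS f) = zeroS by apply: functional_extensionality => m; rewrite /addS subrr.
rewrite additiveS_zero // /addS /oppS /zeroS => /esym /eqP.
by rewrite addrC addr_eq0 => /eqP.
Qed.

Section Bracket.
Variable p : nat -> T -> T -> T.
Hypothesis Hp : forall n, bilinearK (p n).

Lemma extS_addl f f' g n : extS p (addS f f') g n = extS p f g n + extS p f' g n.
Proof.
rewrite /extS -big_split; apply: eq_bigr => i _; rewrite -big_split.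
by apply: eq_bigr => j _; rewrite /addS bilinearK_addl.
Qed.

Lemma extS_shiftl f g : extS p (shiftS f) g = shiftS (extS p f g).
Proof.
apply: functional_extensionality => -[|n]; first by rewrite /extS !big_ord1 bilinearK_0l.
rewrite /extS /= big_ord_recr /= subnn big_ord1 /= bilinearK_0l // addr0.
apply: eq_bigr => i _ /=; rewrite big_ord_recl /= bilinearK_0l // add0r.
have le_in : (i <= n)%N by rewrite -ltnS.
by rewrite (subSn le_in); apply: eq_bigr => j _; rewrite subSS.
Qed.

Lemma extS_coef0 f g : extS p f g 0%N = p 0%N (f 0%N) (g 0%N).
Proof. by rewrite /extS !big_ord1. Qed.

Lemma extS_cstr f (c : T) n : extS p f (cstS c) n = \sum_(i < n.+1) p i (f (n - i)%N) c.
Proof.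
apply: eq_bigr => i _; rewrite big_ord_recr /= subnn big1 ?add0r // => j _.
have := ltn_ord j; rewrite -subn_gt0; case: (n - i - j)%N => // m _.
exact: bilinearK_0r.
Qed.

Lemma extS_cst (a b : T) n : extS p (cstS a) (cstS b) n = p n a b.
Proof.
rewrite extS_cstr big_ord_recr /= subnn big1 ?add0r // => i _.
have := ltn_ord i; rewrite -subn_gt0; case: (n - i)%N => // m _.
exact: bilinearK_0l.
Qed.

End Bracket.

Definition series_morphism (Phi : ser T -> ser T) : Prop :=
  [/\ forall f g, Phi (addS f g) = addS (Phi f) (Phi g),
      forall f, Phi (shiftS f) = shiftS (Phi f),
      forall f g, Phi (mulS f g) = mulS (Phi f) (Phi g) &
      forall f, Phi f 0%N = f 0%N].

Lemma series_morphism_inv (Phi Psi : ser T -> ser T) :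
  cancel Phi Psi -> cancel Psi Phi -> series_morphism Phi -> series_morphism Psi.
Proof.
move=> PhiK PsiK [PhiD PhiS PhiM Phi0]; have Phi_inj := can_inj PhiK.
split=> [f g|f|f g|f]; last by rewrite -{2}(PsiK f) Phi0.
- by apply: Phi_inj; rewrite PhiD !PsiK.
- by apply: Phi_inj; rewrite PhiS !PsiK.
- by apply: Phi_inj; rewrite PhiM !PsiK.
Qed.

End Series.
Arguments zeroS {K T}.

Section Exponential.
Variables (K : fieldType) (B : comAlgType K) (X : nat -> B -> B).
Hypothesis HX : lambda_der X.
Implicit Types f g : ser B.
Local Notation D := (actS X).
Local Notation invf m := ((m`!%:R : K)^-1).

Let X_der i : is_der (X i) := HX.2 i.

Lemma actS_add f g : D (addS f g) = addS (D f) (D g).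
Proof.
apply: functional_extensionality => n; rewrite /actS /addS -big_split.
by apply: eq_bigr => i _; rewrite derD.
Qed.

Lemma iter_actS_add m f g : iter m D (addS f g) = addS (iter m D f) (iter m D g).
Proof. by elim: m => [|m IHm] //=; rewrite IHm actS_add. Qed.

Lemma actS_shift f : D (shiftS f) = shiftS (D f).
Proof.
apply: functional_extensionality => -[|n]; first by rewrite /actS big_ord1 der0.
rewrite /actS /= big_ord_recr /= subnn /= der0 // addr0.
by apply: eq_bigr => i _; rewrite subSn // -ltnS.
Qed.

Lemma iter_actS_shift m f : iter m D (shiftS f) = shiftS (iter m D f).
Proof. by elim: m => [|m IHm] //=; rewrite IHm actS_shift. Qed.

(* Since [X 0 = 0], each application of [D] raises the lambda-adic order. *)
Lemma iter_actS_small m f i : (i < m)%N -> iter m D f i = 0.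
Proof.
elim: m i => [|m IHm] i //= lt_im; rewrite /actS big1 // => -[[|j] lt_ji] _ /=.
  by rewrite HX.1.
by rewrite IHm ?der0 //; lia.
Qed.

Lemma mulS_iter_actS_small p q f g n :
  (n < p + q)%N -> mulS (iter p D f) (iter q D g) n = 0.
Proof.
move=> lt_n_pq; rewrite /mulS big1 // => i _.
have [lt_ip|le_pi] := ltnP i p; first by rewrite iter_actS_small // mul0r.
by rewrite (@iter_actS_small q) ?mulr0 //; have := ltn_ord i; lia.
Qed.

Lemma actS_mul f g n : D (mulS f g) n = mulS f (D g) n + mulS (D f) g n.
Proof.
rewrite /actS /mulS.
under eq_bigr => i _ do rewrite der_sum //.
under eq_bigr => i _ do under eq_bigr => j _ do rewrite (X_der i).2.
under eq_bigr => i _ do rewrite big_split /=.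
rewrite big_split /=; congr (_ + _).
  rewrite (exchange_big_triangle n (fun i j => f j * X i (g (n - i - j)%N))).
  apply: eq_bigr => j _; rewrite mulr_sumr; apply: eq_bigr => i _.
  by rewrite subnAC.
rewrite (big_triangle_assoc n (fun i j r => X i (f j) * g r)).
by apply: eq_bigr => l _; rewrite mulr_suml.
Qed.

Lemma actS_sumMn M (F : nat -> ser B) (c : nat -> nat) n :
  D (fun l => \sum_(p < M) F p l *+ c p) n = \sum_(p < M) D (F p) n *+ c p.
Proof.
rewrite /actS; under eq_bigr => i _ do rewrite der_sum //.
under eq_bigr => i _ do under eq_bigr => j _ do rewrite derMn //.
by rewrite exchange_big; apply: eq_bigr => p _; rewrite sumrMnl.
Qed.

Lemma iter_actS_mul m f g n : iter m D (mulS f g) n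
  = \sum_(p < m.+1) mulS (iter p D f) (iter (m - p) D g) n *+ 'C(m, p).
Proof.
elim: m n => [|m IHm] n; first by rewrite big_ord1.
have IHm' : iter m D (mulS f g)
    = fun l => \sum_(p < m.+1) mulS (iter p D f) (iter (m - p) D g) l *+ 'C(m, p).
  exact: functional_extensionality.
rewrite /= IHm' (actS_sumMn _ (fun p l => mulS (iter p D f) (iter (m - p) D g) l)).
rewrite -(sum_binS m (fun q => mulS (iter q D f) (iter (m.+1 - q) D g) n)).
by apply: eq_bigr => p _; rewrite actS_mul addrC subSS subSn // -ltnS.
Qed.

Lemma expS_add f g : expS X (addS f g) = addS (expS X f) (expS X g).
Proof.
apply: functional_extensionality => n; rewrite /expS /addS -big_split.
by apply: eq_bigr => m _; rewrite iter_actS_add scalerDr.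
Qed.

Lemma expS_shift f : expS X (shiftS f) = shiftS (expS X f).
Proof.
apply: functional_extensionality => -[|n]; first by rewrite /expS big_ord1 /= scaler0.
rewrite /expS /=; under eq_bigr => m _ do rewrite iter_actS_shift.
by rewrite big_ord_recr /= [D _ n](@iter_actS_small n.+1) // scaler0 addr0.
Qed.

Lemma expS_coef0 f : expS X f 0%N = f 0%N.
Proof. by rewrite /expS big_ord1 /= invr1 scale1r. Qed.

Lemma expS_widen f n N :
  (n < N)%N -> expS X f n = \sum_(m < N) invf m *: iter m D f n.
Proof.
move=> lt_nN; apply: (big_ord_widen0 (F := fun m => invf m *: iter m D f n)) => // m lt_nm.
by rewrite iter_actS_small ?scaler0.
Qed.

Hypothesis charK : [pchar K] =i pred0.

Lemma scale_binomial_fact m p (x : B) : (p <= m)%N ->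
  invf m *: (x *+ 'C(m, p)) = (invf p * invf (m - p)) *: x.
Proof.
move=> le_pm; rewrite -scaler_nat scalerA; congr (_ *: _).
have nat_neq0 l : (0 < l)%N -> (l%:R : K) != 0 by move/pcharf0P: charK => ->; rewrite -lt0n.
have := nat_neq0 _ (fact_gt0 p); have := nat_neq0 _ (fact_gt0 (m - p)).
have : ('C(m, p)%:R : K) != 0 by apply: nat_neq0; rewrite bin_gt0.
by rewrite -(bin_fact le_pm) !natrM => ? ? ?; field; do ! (apply/andP; split).
Qed.

Lemma expS_mul f g : expS X (mulS f g) = mulS (expS X f) (expS X g).
Proof.
apply: functional_extensionality => n.
pose F p q := (invf p * invf q) *: mulS (iter p D f) (iter q D g) n.
(* Both sides are the sum of [F p q] over [p, q <= n]: the terms with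
   [p + q > n] vanish by [mulS_iter_actS_small]. *)
transitivity (\sum_(p < n.+1) \sum_(q < n.+1) F p q).
  transitivity (\sum_(m < n.+1) \sum_(p < m.+1) F p (m - p)%N).
    apply: eq_bigr => m _; rewrite iter_actS_mul scaler_sumr.
    by apply: eq_bigr => p _; rewrite scale_binomial_fact // -ltnS.
  rewrite big_antidiagonal; apply: eq_bigr => p _.
  apply: big_ord_widen0; first by rewrite ltnS leq_subr.
  by move=> q ?; rewrite /F mulS_iter_actS_small ?scaler0 //; have := ltn_ord p; lia.
rewrite /mulS; under [RHS]eq_bigr => i _.
  rewrite (@expS_widen f i n.+1) // (@expS_widen g (n - i) n.+1) ?ltnS ?leq_subr //.
  rewrite mulr_suml; under eq_bigr do rewrite mulr_sumr.
  over.
rewrite [RHS]exchange_big; apply: eq_bigr => p _.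
rewrite [RHS]exchange_big; apply: eq_bigr => q _.
rewrite /F scaler_sumr; apply: eq_bigr => i _.
by rewrite -scalerAl -scalerAr scalerA.
Qed.

Lemma expS_series_morphism : series_morphism (expS X).
Proof. by split; [exact: expS_add | exact: expS_shift | exact: expS_mul | exact: expS_coef0]. Qed.

End Exponential.

Section DeformationCoefficients.
Variables (K : fieldType) (T : comAlgType K) (p0 : T -> T -> T) (p : nat -> T -> T -> T).
Hypothesis Hp : formal_poisson_deformation p0 p.

Lemma deformation_antisym n a b : p n a b = - p n b a.
Proof.
have [_ Hpb Hpa _ _] := Hp.
by have := Hpa (cstS a) (cstS b) n; rewrite !extS_cst.
Qed.

Lemma deformation_leibniz n a a' b : p n (a * a') b = a * p n a' b + p n a b * a'.
Proof.
have [_ Hpb _ Hpl _] := Hp.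
have := Hpl (cstS a) (cstS a') (cstS b) n.
by rewrite mulS_cst mulS_cstl mulS_cstr !extS_cst.
Qed.

End DeformationCoefficients.

Section ConjugatedBracket.
Variables (K : fieldType) (B : comAlgType K) (Phi Psi : ser B -> ser B).
Hypotheses (PhiK : cancel Phi Psi) (PsiK : cancel Psi Phi) (HPhi : series_morphism Phi).
Variables (sigma0 : B -> B -> B) (sigma : nat -> B -> B -> B).
Hypothesis Hsigma : formal_poisson_deformation sigma0 sigma.
Implicit Types f g h : ser B.

Definition conjS f g : ser B := Psi (extS sigma (Phi f) (Phi g)).

Let HPsi : series_morphism Psi := series_morphism_inv PhiK PsiK HPhi.
Let sigma_bil : forall n, bilinearK (sigma n).
Proof. by case: Hsigma. Qed.

Lemma conjS_addl f f' g : conjS (addS f f') g = addS (conjS f g) (conjS f' g).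
Proof.
have [PhiD _ _ _] := HPhi; have [PsiD _ _ _] := HPsi.
rewrite /conjS PhiD -PsiD; congr Psi.
by apply: functional_extensionality => n; rewrite (extS_addl sigma_bil).
Qed.

Lemma conjS_shiftl f g : conjS (shiftS f) g = shiftS (conjS f g).
Proof.
have [_ PhiS _ _] := HPhi; have [_ PsiS _ _] := HPsi.
by rewrite /conjS PhiS (extS_shiftl sigma_bil) PsiS.
Qed.

Lemma conjS_coef0 f g : conjS f g 0%N = sigma 0%N (f 0%N) (g 0%N).
Proof.
have [_ _ _ Phi0] := HPhi; have [_ _ _ Psi0] := HPsi.
by rewrite /conjS Psi0 extS_coef0 !Phi0.
Qed.

(* The coefficient form of [K[[lambda]]]-linearity in the first argument. *)
Lemma conjS_coefE f g n : conjS f g n = \sum_(i < n.+1) conjS (cstS (f (n - i)%N)) g i.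
Proof.
elim: n f => [|n IHn] f.
  by rewrite big_ord1 {1}(seriesE f) conjS_addl conjS_shiftl /addS /= addr0.
rewrite {1}(seriesE f) conjS_addl conjS_shiftl /addS /= IHn [RHS]big_ord_recr /= subnn addrC.
by congr (_ + _); apply: eq_bigr => i _; rewrite /tailS subSn // -ltnS.
Qed.

Lemma conjS_antisym f g n : conjS f g n = - conjS g f n.
Proof.
have [_ _ Hsa _ _] := Hsigma; have [PsiD _ _ _] := HPsi.
have anti : extS sigma (Phi f) (Phi g) = oppS (extS sigma (Phi g) (Phi f)).
  exact: functional_extensionality (Hsa _ _).
by rewrite /conjS anti (additiveS_opp PsiD).
Qed.

Lemma conjS_leibniz f g h n :
  conjS (mulS f g) h n = mulS f (conjS g h) n + mulS (conjS f h) g n.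
Proof.
have [_ _ _ Hsl _] := Hsigma; have [PsiD _ PsiM _] := HPsi; have [_ _ PhiM _] := HPhi.
have leib : extS sigma (mulS (Phi f) (Phi g)) (Phi h)
    = addS (mulS (Phi f) (extS sigma (Phi g) (Phi h)))
           (mulS (extS sigma (Phi f) (Phi h)) (Phi g)).
  exact: functional_extensionality (Hsl _ _ _).
by rewrite /conjS PhiM leib PsiD !PsiM !PhiK.
Qed.

Lemma conjS_jacobi f g h n :
  conjS (conjS f g) h n + conjS (conjS g h) f n + conjS (conjS h f) g n = 0.
Proof.
have [_ _ _ _ Hsj] := Hsigma; have [PsiD _ _ _] := HPsi.
rewrite /conjS !PsiK -[LHS]/(addS (addS (Psi _) (Psi _)) (Psi _) n) -!PsiD.
have -> : addS (addS (extS sigma (extS sigma (Phi f) (Phi g)) (Phi h))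
                     (extS sigma (extS sigma (Phi g) (Phi h)) (Phi f)))
               (extS sigma (extS sigma (Phi h) (Phi f)) (Phi g)) = zeroS.
  by apply: functional_extensionality => m; rewrite /addS Hsj.
by rewrite (additiveS_zero PsiD).
Qed.

End ConjugatedBracket.

Lemma CE_delta2_cyclic (K : fieldType) (A B : comAlgType K) (pi0 : A -> A -> A)
    (sigma0 : B -> B -> B) (phi0 : A -> B) (R : A -> A -> B) :
  (forall a b, pi0 a b = - pi0 b a) -> (forall x y, sigma0 x y = - sigma0 y x) ->
  bilinearK sigma0 -> bilinearK R -> (forall a b, R a b = - R b a) ->
  forall a0 a1 a2, CE_delta2 pi0 sigma0 phi0 R a0 a1 a2
  = - (sigma0 (R a0 a1) (phi0 a2) + R (pi0 a0 a1) a2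
       + (sigma0 (R a1 a2) (phi0 a0) + R (pi0 a1 a2) a0)
       + (sigma0 (R a2 a0) (phi0 a1) + R (pi0 a2 a0) a1)).
Proof.
move=> pi0_anti sigma0_anti sigma0_bil R_bil R_anti a0 a1 a2.
rewrite /CE_delta2 (sigma0_anti (phi0 a0)) (sigma0_anti (phi0 a1)) (sigma0_anti (phi0 a2)).
rewrite (R_anti a0 a2) (bilinearK_Nl sigma0_bil) (pi0_anti a0 a2) (bilinearK_Nl R_bil).
ring.
Qed.

Section Cocycle.
Variables (K : fieldType) (A B : comAlgType K).
Variables (pi0 : A -> A -> A) (sigma0 : B -> B -> B).
Hypotheses (Hpi0 : is_poisson pi0) (Hsigma0 : is_poisson sigma0).
Variable phi0 : {lrmorphism A -> B}.
Hypothesis Hphi0 : forall a b, phi0 (pi0 a b) = sigma0 (phi0 a) (phi0 b).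
Variables (pi : nat -> A -> A -> A) (sigma : nat -> B -> B -> B).
Hypotheses (Hpi : formal_poisson_deformation pi0 pi)
           (Hsigma : formal_poisson_deformation sigma0 sigma).
Variables (Phi Psi : ser B -> ser B).
Hypotheses (PhiK : cancel Phi Psi) (PsiK : cancel Psi Phi) (HPhi : series_morphism Phi).
Variables (k : nat) (R : A -> A -> B).
Hypothesis HR : bilinearK R.

Local Notation br := (conjS Phi Psi sigma).
Local Notation cst a := (cstS (phi0 a)).

Hypothesis Hexp : forall a b n, (n <= k.+1)%N ->
  br (cst a) (cst b) n = phi0 (pi n a b) + (if n == k.+1 then R a b else 0).

Lemma R_antisym a b : R a b = - R b a.
Proof.
have := conjS_antisym PhiK PsiK HPhi Hsigma (cst a) (cst b) k.+1.
by rewrite !Hexp // eqxx (deformation_antisym Hpi _ a b) rmorphN opprD => /addrI.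
Qed.

Lemma R_leibniz a a' b : R (a * a') b = phi0 a * R a' b + R a b * phi0 a'.
Proof.
have := conjS_leibniz PhiK PsiK HPhi Hsigma (cst a) (cst a') (cst b) k.+1.
rewrite mulS_cst -rmorphM mulS_cstl mulS_cstr !Hexp // eqxx.
rewrite (deformation_leibniz Hpi) rmorphD !rmorphM mulrDr mulrDl addrACA.
by move/addrI.
Qed.

Lemma R_CE2_der : CE2_der phi0 R.
Proof.
split=> //; [exact: R_antisym | exact: R_leibniz | move=> a a' b].
by rewrite R_antisym R_leibniz (R_antisym b a') (R_antisym b a); ring.
Qed.

Lemma conjS_jacobi_term a b c i : (i < k.+2)%N ->
  br (cstS (br (cst a) (cst b) (k.+1 - i)%N)) (cst c) i
  = phi0 (pi i (pi (k.+1 - i)%N a b) c)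
    + (if i == 0%N then sigma0 (R a b) (phi0 c) else 0)
    + (if i == k.+1 then R (pi0 a b) c else 0).
Proof.
have [pi_0 _ _ _ _] := Hpi; have [sigma_0 _ _ _ _] := Hsigma.
have [sigma0_bil _ _ _] := Hsigma0.
case: i => [|i] lt_ik.
  rewrite subn0 Hexp // eqxx conjS_coef0 //= sigma_0 (bilinearK_addl sigma0_bil).
  by rewrite -Hphi0 pi_0 addr0.
have lt_ki : (k.+1 - i.+1 < k.+1)%N by rewrite subSS ltnS leq_subr.
rewrite Hexp ?(ltnW lt_ki) // (ltn_eqF lt_ki) addr0 Hexp //= addr0.
by case: eqP => [->|//]; rewrite subnn pi_0.
Qed.

Lemma conjS_jacobi_coef a b c :
  br (br (cst a) (cst b)) (cst c) k.+1
  = phi0 (extS pi (extS pi (cstS a) (cstS b)) (cstS c) k.+1)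
    + sigma0 (R a b) (phi0 c) + R (pi0 a b) c.
Proof.
have pi_bil : forall n, bilinearK (pi n) by case: Hpi.
rewrite (conjS_coefE PhiK PsiK HPhi Hsigma).
under eq_bigr => i _ do rewrite conjS_jacobi_term //.
rewrite !big_split /= (extS_cstr pi_bil) rmorph_sum; congr (_ + _ + _).
- by apply: eq_bigr => i _; rewrite extS_cst.
- by rewrite big_ord_recl /= big1 ?addr0.
- by rewrite big_ord_recr /= eqxx big1 ?add0r // => i _; rewrite ltn_eqF.
Qed.

Lemma R_jacobi a0 a1 a2 :
  sigma0 (R a0 a1) (phi0 a2) + R (pi0 a0 a1) a2
  + (sigma0 (R a1 a2) (phi0 a0) + R (pi0 a1 a2) a0)
  + (sigma0 (R a2 a0) (phi0 a1) + R (pi0 a2 a0) a1) = 0.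
Proof.
have [_ _ _ _ pi_jacobi] := Hpi.
have := pi_jacobi (cstS a0) (cstS a1) (cstS a2) k.+1.
move/(congr1 phi0); rewrite !rmorphD rmorph0 => pi_jac.
have := conjS_jacobi PhiK PsiK HPhi Hsigma (cst a0) (cst a1) (cst a2) k.+1.
rewrite !conjS_jacobi_coef => br_jac.
by rewrite -br_jac -[LHS]addr0 -pi_jac; ring.
Qed.

Lemma R_CE_der_2cocycle : CE_der_2cocycle pi0 sigma0 phi0 R.
Proof.
have [_ pi0_anti _ _] := Hpi0; have [sigma0_bil sigma0_anti _ _] := Hsigma0.
split=> [|a0 a1 a2]; first exact: R_CE2_der.
by rewrite CE_delta2_cyclic // ?R_jacobi ?oppr0 //; exact: R_antisym.
Qed.

End Cocycle.

Unset Implicit Arguments.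

Theorem lemma3p5 (K : fieldType) (charK : [pchar K] =i pred0)
  (A B : comAlgType K) (pi0 : A -> A -> A) (sigma0 : B -> B -> B)
  (Hpi0 : is_poisson pi0) (Hsigma0 : is_poisson sigma0)
  (phi0 : {lrmorphism A -> B})
  (Hphi0 : forall a b, phi0 (pi0 a b) = sigma0 (phi0 a) (phi0 b))
  (pi : nat -> A -> A -> A) (sigma : nat -> B -> B -> B)
  (Hpi : formal_poisson_deformation pi0 pi)
  (Hsigma : formal_poisson_deformation sigma0 sigma)
  (k : nat) (X : nat -> B -> B) (HX : lambda_der X)
  (Phiinv : ser B -> ser B)
  (HPhiinv1 : forall f, Phiinv (expS X f) = f)
  (HPhiinv2 : forall f, expS X (Phiinv f) = f)
  (R : A -> A -> B) (HR : bilinearK R)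
  (Hexp : forall a1 a2 n, (n <= k.+1)%N ->
     Phiinv (extS sigma (expS X (cstS (phi0 a1))) (expS X (cstS (phi0 a2)))) n
     = phi0 (pi n a1 a2) + (if n == k.+1 then R a1 a2 else 0)) :
  CE_der_2cocycle pi0 sigma0 phi0 R.
Proof.
exact: (R_CE_der_2cocycle Hpi0 Hsigma0 Hphi0 Hpi Hsigma HPhiinv1 HPhiinv2
          (expS_series_morphism HX charK) HR Hexp).
Qed.
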